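(* For $n=5$ leaves, any two quartet-matched pairs of binary trees $T_1,T_2$ and $T_3,T_4$ satisfy $\{T_1,T_2\}=\{T_3,T_4\}$. For $n=6$ leaves, every quartet-matched pair with $\{T_1,T_2\}\neq\{T_3,T_4\}$ is equivalent, up to the action of the symmetric group $\mathfrak{S}_6$ on leaf labels, to the pairs $T_1=\{12|3456,\,123|456,\,1234|56\}$, $T_2=\{13|2456,\,123|456,\,1235|46\}$, $T_3=\{13|2456,\,123|456,\,1234|56\}$, $T_4=\{12|3456,\,123|456,\,1235|46\}$.
   Context: Trees are unrooted binary trees with leaves labelled bijectively by $[n]$, described by their sets of nontrivial splits. For $Q\subseteq[n]$, $T|_Q$ denotes the induced subtree on leaf set $Q$. For trees $T_i,T_j$, $\mathcal{Q}(T_i,T_j)$ denotes the multiset of all quartet trees $T_i|_Q$ and $T_j|_Q$ for all four-element $Q\subseteq[n]$. Two pairs of trees $T_1,T_2$ and $T_3,T_4$ are quartet-matched if $\mathcal{Q}(T_1,T_2)=\mathcal{Q}(T_3,T_4)$. *)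

From mathcomp Require Import all_boot all_fingroup.
Set Implicit Arguments. Unset Strict Implicit. Unset Printing Implicit Defensive.

(* Leaves are labelled by 'I_n (label k of the paper is the ordinal k-1).
   A split of a leaf set X is the unordered pair {A, B} of its two parts,
   represented as a set of two sets of leaves.  A tree is its set of
   nontrivial splits. *)
Notation split_t n := {set {set 'I_n}}.
Notation tree_t n := {set {set {set 'I_n}}}.

Definition is_nt_split n (X : {set 'I_n}) (s : split_t n) : bool :=
  [exists A : {set 'I_n}, exists B : {set 'I_n},
     [&& s == [set A; B], [disjoint A & B], A :|: B == X,
         1 < #|A| & 1 < #|B| ]].

Definition compatible n (s1 s2 : split_t n) : bool :=
  [exists A in s1, exists B in s2, [disjoint A & B]].

(* unrooted binary tree on leaf set [n], described by its set of nontrivial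
   splits: a pairwise compatible set of nontrivial splits of [n] of maximal
   size n - 3 (Buneman's splits-equivalence theorem) *)
Definition is_binary_tree n (T : tree_t n) : bool :=
  [&& [forall s in T, is_nt_split [set: 'I_n] s],
      [forall s1 in T, forall s2 in T, compatible s1 s2]
    & #|T| == n - 3].

Definition restrict n (T : tree_t n) (Q : {set 'I_n}) : tree_t n :=
  [set [set A :&: Q | A : {set 'I_n} in s] | s : split_t n in T
       & is_nt_split Q [set A :&: Q | A : {set 'I_n} in s]].

Definition quartets n : seq {set 'I_n} := enum [set Q : {set 'I_n} | #|Q| == 4].

(* the multiset Q(Ti, Tj), as a sequence up to permutation *)
Definition quartet_multiset n (Ti Tj : tree_t n) : seq (tree_t n) :=
  [seq restrict Ti Q | Q <- quartets n] ++ [seq restrict Tj Q | Q <- quartets n].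

Definition quartet_matched n (T1 T2 T3 T4 : tree_t n) : Prop :=
  perm_eq (quartet_multiset T1 T2) (quartet_multiset T3 T4).

Definition upair_eq (U : Type) (a b c d : U) : Prop :=
  (a = c /\ b = d) \/ (a = d /\ b = c).

Definition relabel n (s : {perm 'I_n}) (T : tree_t n) : tree_t n :=
  [set [set s @: A | A : {set 'I_n} in sp] | sp : split_t n in T].

Definition mk_split n (A : {set 'I_n}) : split_t n := [set A; ~: A].

Definition L6 (k : nat) : 'I_6 := inord k.-1.

Definition T1_6 : tree_t 6 :=
  [set mk_split [set L6 1; L6 2]; mk_split [set L6 1; L6 2; L6 3];
       mk_split [set L6 1; L6 2; L6 3; L6 4]].
Definition T2_6 : tree_t 6 :=
  [set mk_split [set L6 1; L6 3]; mk_split [set L6 1; L6 2; L6 3];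
       mk_split [set L6 1; L6 2; L6 3; L6 5]].
Definition T3_6 : tree_t 6 :=
  [set mk_split [set L6 1; L6 3]; mk_split [set L6 1; L6 2; L6 3];
       mk_split [set L6 1; L6 2; L6 3; L6 4]].
Definition T4_6 : tree_t 6 :=
  [set mk_split [set L6 1; L6 2]; mk_split [set L6 1; L6 2; L6 3];
       mk_split [set L6 1; L6 2; L6 3; L6 5]].

Definition same_config n (U1 U2 U3 U4 V1 V2 V3 V4 : tree_t n) : Prop :=
  (upair_eq U1 U2 V1 V2 /\ upair_eq U3 U4 V3 V4) \/
  (upair_eq U1 U2 V3 V4 /\ upair_eq U3 U4 V1 V2).

From mathcomp Require Import all_boot all_fingroup.
Set Implicit Arguments. Unset Strict Implicit. Unset Printing Implicit Defensive.

(* Both claims are finite and are decided by computation. A split of [n] is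
   encoded by the bit vector of its side avoiding leaf 0, and every binary tree
   is the tree of one of the enumerated code lists [code_trees] (15 for n = 5,
   105 for n = 6). The restriction of such a tree to a quartet Q is a single
   quartet split, determined by the side of Q containing its least leaf, and
   distinct such pairs give distinct quartet trees. Hence Q(T1,T2) = Q(T3,T4)
   iff on every quartet the sides of T3 and T4 are those of T1 and T2 in some
   order; so T1, T2, T3 determine the quartet profile of T4, which makes an
   exhaustive search over triples feasible. For n = 6 the solutions other than
   {T1,T2} = {T3,T4} are matched against the 720 relabelings of the reference
   configuration. *)

Lemma existsb_in_set2 (T : finType) (a b : T) (P : pred T) :
  [exists x in [set a; b], P x] = P a || P b.
Proof.
apply/existsP/orP => [[x /andP[/set2P[->|->] Px]]|[Pa|Pb]]; [by left|by right| |].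
- by exists a; rewrite set21 Pa.
- by exists b; rewrite set22 Pb.
Qed.

Lemma mk_splitC n (A : {set 'I_n}) : mk_split (~: A) = mk_split A.
Proof. by rewrite /mk_split setCK setUC. Qed.

Fixpoint bitseqs m : seq bitseq :=
  if m is m'.+1 then map (cons false) (bitseqs m') ++ map (cons true) (bitseqs m')
  else [:: [::]].

Lemma mem_map_cons (b b' : bool) c (X : seq bitseq) :
  (b :: c \in map (cons b') X) = (b == b') && (c \in X).
Proof.
apply/mapP/andP => [[y yX [-> ->]]|[/eqP-> cX]]; first by split.
by exists c.
Qed.

Lemma mem_bitseqs m c : (c \in bitseqs m) = (size c == m).
Proof.
elim: m c => [|m IH] [|b c] //=.
- by rewrite mem_cat; apply/norP; split; apply/mapP; case.
- by rewrite mem_cat !mem_map_cons IH eqSS; case: b; rewrite ?orbF.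
Qed.

Lemma bitseqs_uniq m : uniq (bitseqs m).
Proof.
elim: m => //= m IH.
have cons_inj (b : bool) : injective (cons b) by move=> ? ? [].
rewrite cat_uniq !map_inj_uniq // IH andbT /=.
by apply/hasPn => _ /mapP[c _ ->]; rewrite mem_map_cons.
Qed.

Fixpoint combinations (T : Type) m (s : seq T) : seq (seq T) :=
  match m, s with
  | 0, _ => [:: [::]]
  | _.+1, [::] => [::]
  | m'.+1, x :: s' => map (cons x) (combinations m' s') ++ combinations m s'
  end.

Lemma mem_combinations (T : eqType) m (s t : seq T) :
  subseq t s -> size t = m -> t \in combinations m s.
Proof.
elim: s m t => [|x s IH] m [|y t] //=; try by move=> _ <-.
move=> sub_yt <-; rewrite mem_cat.
case: eqP sub_yt => [<- sub_ts|_ sub_yts]; first by rewrite map_f ?(IH _ _ sub_ts).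
by rewrite (IH _ _ sub_yts) ?orbT.
Qed.

Section Codes.
Variable n : nat.

Definition set_of_code (c : bitseq) : {set 'I_n} := [set i : 'I_n | nth false c i].
Definition code_of_set (A : {set 'I_n}) : bitseq := [seq i \in A | i <- enum 'I_n].
Definition code_card (c : bitseq) := count (nth false c) (iota 0 n).
Definition code_meet (c d : bitseq) := mkseq (fun i => nth false c i && nth false d i) n.
Definition code_compl (c : bitseq) := mkseq (fun i => ~~ nth false c i) n.

Lemma size_code_of_set A : size (code_of_set A) = n.
Proof. by rewrite size_map size_enum_ord. Qed.

Lemma code_of_setK : cancel code_of_set set_of_code.
Proof.
move=> A; apply/setP=> i; rewrite inE (nth_map i) ?size_enum_ord ?ltn_ord //.
by rewrite nth_ord_enum.
Qed.

Lemma nth_code_of_set A i (lt_i_n : i < n) :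
  nth false (code_of_set A) i = (Ordinal lt_i_n \in A).
Proof. by have /setP/(_ (Ordinal lt_i_n)) := code_of_setK A; rewrite inE. Qed.

Lemma card_set_of_code c : #|set_of_code c| = code_card c.
Proof.
rewrite cardE /enum_mem size_filter -enumT /code_card -val_enum_ord count_map.
by apply: eq_count => i; rewrite /= inE.
Qed.

Lemma set_of_code_inj c d :
  size c = n -> size d = n -> set_of_code c = set_of_code d -> c = d.
Proof.
move=> sc sd /setP E; apply: (@eq_from_nth _ false); rewrite ?sc ?sd // => i lt_i_n.
by have := E (Ordinal lt_i_n); rewrite !inE.
Qed.

Lemma set_of_code_compl c : set_of_code (code_compl c) = ~: set_of_code c.
Proof. by apply/setP=> i; rewrite !inE nth_mkseq. Qed.

Lemma set_of_code_meet c d :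
  set_of_code (code_meet c d) = set_of_code c :&: set_of_code d.
Proof. by apply/setP=> i; rewrite !inE nth_mkseq. Qed.

Definition code_disjoint c d := code_card (code_meet c d) == 0.

Lemma disjoint_set_of_code c d :
  [disjoint set_of_code c & set_of_code d] = code_disjoint c d.
Proof. by rewrite -setI_eq0 -set_of_code_meet -cards_eq0 card_set_of_code. Qed.

Definition code_compatible c d :=
  [|| code_disjoint c d, code_disjoint c (code_compl d),
      code_disjoint (code_compl c) d | code_disjoint (code_compl c) (code_compl d)].

Definition split_of_code c := mk_split (set_of_code c).

Lemma compatible_split_of_code c d :
  compatible (split_of_code c) (split_of_code d) = code_compatible c d.
Proof.
rewrite /compatible /split_of_code /mk_split.
rewrite (existsb_in_set2 _ _
  (fun A : {set 'I_n} => [exists B in [set set_of_code d; ~: set_of_code d], [disjoint A & B]])).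
rewrite !existsb_in_set2 -!set_of_code_compl !disjoint_set_of_code.
by rewrite /code_compatible !orbA.
Qed.

Lemma split_of_code_compl c : split_of_code (code_compl c) = split_of_code c.
Proof. by rewrite /split_of_code set_of_code_compl mk_splitC. Qed.

Definition tree_of_codes (l : seq bitseq) : tree_t n := [set s in map split_of_code l].

(* Putting leaf 0 on the 0 side makes the code of a split unique. *)
Definition split_code c :=
  [&& size c == n, ~~ nth false c 0, 1 < code_card c & 1 < code_card (code_compl c)].

Lemma nt_split_mk (s : split_t n) : is_nt_split [set: 'I_n] s ->
  exists A, [/\ s = mk_split A, 1 < #|A| & 1 < #|~: A|].
Proof.
case/existsP=> A /existsP [B /and5P[/eqP-> dAB /eqP UAB cA cB]].
suff eB : B = ~: A by exists A; rewrite /mk_split -eB.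
apply/setP=> x; rewrite inE; have: x \in A :|: B by rewrite UAB inE.
rewrite inE; case xA: (x \in A) => /= xB; last by rewrite xB.
by rewrite (disjointFr dAB xA).
Qed.

Lemma nt_split_code (s : split_t n) : is_nt_split [set: 'I_n] s ->
  exists2 c, s = split_of_code c & split_code c.
Proof.
case/nt_split_mk=> A [-> cA cAc].
have [i _] : exists i, i \in A by apply/set0Pn; rewrite -card_gt0 ltnW.
have n_gt0 : 0 < n := leq_ltn_trans (leq0n i) (ltn_ord i).
pose B := if Ordinal n_gt0 \in A then ~: A else A.
exists (code_of_set B).
  by rewrite /split_of_code code_of_setK /B; case: ifP; rewrite ?mk_splitC.
rewrite /split_code size_code_of_set (nth_code_of_set _ n_gt0) -!card_set_of_code.
rewrite set_of_code_compl code_of_setK /B.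
by rewrite eqxx; case: ifP => [iA|->]; rewrite ?inE ?iA ?setCK ?cA ?cAc.
Qed.

Lemma codes_of_splits (e : seq (split_t n)) :
  {in e, forall s, is_nt_split [set: 'I_n] s} ->
  exists2 l, e = map split_of_code l & all split_code l.
Proof.
elim: e => [|s e IH] nt_e; first by exists [::].
have [c -> split_c] := nt_split_code (nt_e s (mem_head _ _)).
have [|l -> split_l] := IH; first by move=> x xe; apply: nt_e; rewrite inE xe orbT.
by exists (c :: l); rewrite //= split_c.
Qed.

Lemma binary_tree_codes (T : tree_t n) : is_binary_tree T ->
  exists l, [/\ T = tree_of_codes l, size l = n - 3, uniq l, all split_code l
              & allrel code_compatible l l].
Proof.
case/and3P=> /forall_inP nt_T /forall_inP compat_T /eqP card_T.
have [|l enumT split_l] := codes_of_splits (e := enum T).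
  by move=> s; rewrite mem_enum; apply: nt_T.
have T_l : T = tree_of_codes l by apply/setP=> s; rewrite inE -enumT mem_enum.
have mem_T c : c \in l -> split_of_code c \in T by rewrite T_l inE; apply: map_f.
exists l; split=> //.
- by rewrite -(size_map split_of_code) -enumT -cardE.
- by apply: (map_uniq (f := split_of_code)); rewrite -enumT enum_uniq.
apply/allrelP=> c d cl dl; rewrite -compatible_split_of_code.
exact: (forall_inP (compat_T _ (mem_T c cl))) _ (mem_T d dl).
Qed.

Definition split_codes := [seq c <- bitseqs n | split_code c].

Definition code_trees :=
  [seq l <- combinations (n - 3) split_codes | allrel code_compatible l l].

Lemma binary_tree_in_code_trees (T : tree_t n) : is_binary_tree T ->
  exists2 l, l \in code_trees & T = tree_of_codes l.
Proof.
case/binary_tree_codes=> l0 [-> size_l0 uniq_l0 split_l0 compat_l0].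
pose l := [seq c <- split_codes | c \in l0].
have perm_l : perm_eq l l0.
  apply: uniq_perm; rewrite ?filter_uniq ?bitseqs_uniq // => c.
  rewrite !mem_filter mem_bitseqs andb_idr // => cl0.
  by have split_c := allP split_l0 c cl0; rewrite split_c; case/and4P: split_c.
exists l.
  rewrite mem_filter mem_combinations ?filter_subseq ?(perm_size perm_l) //.
  by rewrite andbT; apply/allrelP=> c d; rewrite !(perm_mem perm_l); apply/allrelP.
by apply/setP=> s; rewrite !inE (perm_mem (perm_map _ perm_l)).
Qed.

End Codes.

Lemma eq_pair_count (T : eqType) (a b c d : T) :
  (forall x, (a == x) + (b == x) = (c == x) + (d == x)) ->
  ((c == a) || (c == b)) /\ d = (if c == a then b else a).
Proof.
move=> count_eq; have count_c := count_eq c; rewrite eqxx in count_c.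
case: (c =P a) => [ca|ca].
  subst c; split=> //.
  by have count_b := count_eq b; rewrite eqxx in count_b; move/addnI: count_b; case: eqP.
move/eqP/negPf: ca => ca; rewrite eq_sym ca in count_c.
have cb : b == c by move: count_c; case: (b == c).
split; first by rewrite eq_sym cb.
have := count_eq a; rewrite eqxx ca.
by case: (d =P a) => // _; case: (b == a).
Qed.

Lemma perm_map_inj_in (T1 T2 : eqType) (f : T1 -> T2) (D : pred T1) (s1 s2 : seq T1) :
  {in D &, injective f} -> all D s1 -> all D s2 ->
  perm_eq (map f s1) (map f s2) -> perm_eq s1 s2.
Proof.
move=> f_inj /allP D_s1 /allP D_s2 /seq.permP count_f; apply/allP=> x.
rewrite mem_cat => x_s; have D_x : D x by case/orP: x_s => [/D_s1|/D_s2].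
have count_map_f s : {subset s <= D} -> count_mem x s = count (pred1 (f x)) (map f s).
  move=> D_s; rewrite count_map; apply: eq_in_count => y y_s /=.
  by apply/eqP/eqP=> [->//|]; apply: f_inj (D_s _ y_s) D_x.
by rewrite /= (count_map_f s1) // (count_map_f s2) // count_f.
Qed.

(* [vm_compute] evaluates both arguments of [&&]; these traversals stop at the
   first failure, which keeps the exhaustive searches below fast. *)
Fixpoint all2_lazy (T S : Type) (r : T -> S -> bool) s1 s2 :=
  match s1, s2 with
  | x1 :: s1', x2 :: s2' => if r x1 x2 then all2_lazy r s1' s2' else false
  | [::], [::] => true
  | _, _ => false
  end.

Fixpoint all3_lazy (T : Type) (r : T -> T -> T -> bool) (s1 s2 s3 : seq T) :=
  match s1, s2, s3 with
  | x1 :: s1', x2 :: s2', x3 :: s3' =>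
      if r x1 x2 x3 then all3_lazy r s1' s2' s3' else false
  | _, _, _ => true
  end.

Fixpoint has_lazy (T : Type) (p : pred T) s :=
  if s is x :: s' then (if p x then true else has_lazy p s') else false.

Fixpoint map3 (T : Type) (f : T -> T -> T -> T) (s1 s2 s3 : seq T) :=
  match s1, s2, s3 with
  | x1 :: s1', x2 :: s2', x3 :: s3' => f x1 x2 x3 :: map3 f s1' s2' s3'
  | _, _, _ => [::]
  end.

Lemma all2_lazy_eq (T : eqType) (s1 s2 : seq T) : all2_lazy eq_op s1 s2 = (s1 == s2).
Proof. by elim: s1 s2 => [|x1 s1 IH] [|x2 s2] //=; rewrite eqseq_cons IH; case: eqP. Qed.

Lemma all3_lazy_map (I T : Type) (r : T -> T -> T -> bool) (f g h : I -> T) s :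
  all3_lazy r (map f s) (map g s) (map h s) = all (fun i => r (f i) (g i) (h i)) s.
Proof. by elim: s => //= i s ->; case: (r _ _ _). Qed.

Lemma map3_map (I T : Type) (F : T -> T -> T -> T) (f g h : I -> T) s :
  map3 F (map f s) (map g s) (map h s) = map (fun i => F (f i) (g i) (h i)) s.
Proof. by elim: s => //= i s ->. Qed.

Lemma has_lazyE (T : Type) (p : pred T) s : has_lazy p s = has p s.
Proof. by elim: s => //= x s ->; case: (p x). Qed.

Section Quartets.
Variable n : nat.
Local Notation set_of_code := (@set_of_code n).
Local Notation code_meet := (@code_meet n).
Local Notation code_compl := (@code_compl n).
Local Notation code_card := (@code_card n).
Local Notation split_of_code := (@split_of_code n).
Local Notation tree_of_codes := (@tree_of_codes n).
Local Notation code_trees := (@code_trees n).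

Definition quartet_codes := [seq q <- bitseqs n | code_card q == 4].

Lemma perm_quartets : perm_eq (quartets n) (map set_of_code quartet_codes).
Proof.
apply: uniq_perm; rewrite ?enum_uniq ?map_inj_in_uniq ?filter_uniq ?bitseqs_uniq //.
  move=> q q'; rewrite /quartet_codes !mem_filter !mem_bitseqs => /andP[_ /eqP size_q].
  by case/andP=> _ /eqP; apply: set_of_code_inj.
move=> Q; rewrite mem_enum inE; apply/idP/mapP=> [card_Q|[q]].
  exists (code_of_set Q); last by rewrite code_of_setK.
  rewrite /quartet_codes mem_filter mem_bitseqs size_code_of_set -card_set_of_code.
  by rewrite code_of_setK eqxx andbT.
by rewrite /quartet_codes mem_filter => /andP[/eqP card_q _] ->; rewrite card_set_of_code card_q.
Qed.

Definition quartet_split (Q P : {set 'I_n}) : split_t n := [set P; Q :\: P].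

Definition induces_nt_split q c :=
  (1 < code_card (code_meet c q)) && (1 < code_card (code_meet (code_compl c) q)).

Definition induces_split c p q :=
  ((code_meet c q == p) && (code_meet (code_compl c) q == code_meet q (code_compl p))) ||
  ((code_meet c q == code_meet q (code_compl p)) && (code_meet (code_compl c) q == p)).

(* The side of T|_Q containing the least leaf of Q, read off the first split of
   T inducing a nontrivial split of Q (junk if there is none). *)
Definition quartet_side l q :=
  let c := nth [::] l (find (induces_nt_split q) l) in
  if nth false (code_meet c q) (index true q) then code_meet c q
  else code_meet (code_compl c) q.

Definition restricts_to_quartet l q :=
  has (induces_nt_split q) l &&
  all (fun c => induces_nt_split q c ==> induces_split c (quartet_side l q) q) l.

Lemma is_nt_split_set2 (X Y Q : {set 'I_n}) : [disjoint X & Y] -> X :|: Y = Q ->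
  is_nt_split Q [set X; Y] = (1 < #|X|) && (1 < #|Y|).
Proof.
move=> dXY UXY; apply/existsP/andP=> [[A /existsP[B /and5P[/eqP E _ _ cA cB]]]|[cX cY]].
  have: X \in [set A; B] by rewrite -E set21.
  have: Y \in [set A; B] by rewrite -E set22.
  by case/set2P=> ->; case/set2P=> ->.
by exists X; apply/existsP; exists Y; rewrite eqxx dXY UXY eqxx cX cY.
Qed.

Lemma restrict_tree_of_codes l q : restricts_to_quartet l q ->
  restrict (tree_of_codes l) (set_of_code q) =
  [set quartet_split (set_of_code q) (set_of_code (quartet_side l q))].
Proof.
case/andP=> /hasP[c0 c0l nt_c0] /allP induces_l.
set p := quartet_side l q.
have restrict_split c : [set A :&: set_of_code q | A in split_of_code c] =
    [set set_of_code (code_meet c q); set_of_code (code_meet (code_compl c) q)].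
  by rewrite /split_of_code /mk_split imsetU1 imset_set1 !set_of_code_meet set_of_code_compl.
have nt_split c : is_nt_split (set_of_code q)
    [set set_of_code (code_meet c q); set_of_code (code_meet (code_compl c) q)] =
    induces_nt_split q c.
  rewrite is_nt_split_set2 ?card_set_of_code // !set_of_code_meet set_of_code_compl.
    rewrite -setI_eq0; apply/eqP/setP=> x; rewrite !inE.
    by case: (nth false c x); case: (nth false q x).
  by apply/setP=> x; rewrite !inE; case: (nth false c x); case: (nth false q x).
have split_p c : c \in l -> induces_nt_split q c ->
    [set set_of_code (code_meet c q); set_of_code (code_meet (code_compl c) q)] =
    quartet_split (set_of_code q) (set_of_code p).
  move=> cl nt_c; have := induces_l c cl; rewrite nt_c /= /induces_split /quartet_split.
  have -> : set_of_code q :\: set_of_code p = set_of_code (code_meet q (code_compl p)).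
    by rewrite set_of_code_meet set_of_code_compl setDE.
  by case/orP=> /andP[/eqP-> /eqP->] //; apply: setUC.
apply/setP=> y; rewrite inE; apply/imsetP/eqP=> [[s]|->].
  rewrite inE => /andP[]; rewrite inE => /mapP[c cl ->] nt ->.
  by rewrite restrict_split nt_split in nt *; apply: split_p.
exists (split_of_code c0); last by rewrite restrict_split split_p.
by rewrite inE restrict_split nt_split nt_c0 andbT inE map_f.
Qed.

Definition quartet_side_pair (x : bitseq * bitseq) :=
  [&& size x.1 == n, size x.2 == n, code_meet x.2 x.1 == x.2
    & nth false x.2 (index true x.1)].

Definition quartet_tree (x : bitseq * bitseq) : tree_t n :=
  [set quartet_split (set_of_code x.1) (set_of_code x.2)].

Lemma quartet_tree_inj : {in quartet_side_pair &, injective quartet_tree}.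
Proof.
move=> [q p] [q' p'] /and4P[/= /eqP size_q /eqP size_p pq p_min].
case/and4P=> /= /eqP size_q' /eqP size_p' p'q' p'_min /set1_inj /= E.
have cover_split a b : code_meet b a == b ->
    set_of_code b :|: (set_of_code a :\: set_of_code b) = set_of_code a.
  move=> /eqP {1}<-; apply/setP=> x; rewrite set_of_code_meet !inE.
  by case: (nth false b x); case: (nth false a x).
have qq' : q = q'.
  apply: (@set_of_code_inj n) => //; rewrite -(cover_split _ _ pq) -(cover_split _ _ p'q').
  apply/setP=> x; rewrite !in_setU.
  have mem_set2 (A B : {set 'I_n}) : (x \in A) || (x \in B) = [exists C in [set A; B], x \in C].
    by rewrite (existsb_in_set2 A B (fun C : {set 'I_n} => x \in C)).
  rewrite !mem_set2.
  by move: E; rewrite /quartet_split => ->.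
subst q'.
have min_lt : index true q < n.
  by rewrite -size_p ltnNge; apply: contraL p_min => /(nth_default false)->.
have min_p : Ordinal min_lt \in set_of_code p by rewrite inE.
have min_p' : Ordinal min_lt \in set_of_code p' by rewrite inE.
have : set_of_code p \in quartet_split (set_of_code q) (set_of_code p') by rewrite -E set21.
case/set2P=> [pp'|pd]; first by rewrite (set_of_code_inj size_p size_p' pp').
by move: min_p; rewrite pd in_setD min_p'.
Qed.

Definition quartet_sides l := [seq (q, quartet_side l q) | q <- quartet_codes].

Lemma count_quartet_sides l q x : q \in quartet_codes ->
  count_mem (q, x) (quartet_sides l) = (quartet_side l q == x).
Proof.
move=> q_in; rewrite count_map.
have uniq_qc : uniq quartet_codes by rewrite filter_uniq ?bitseqs_uniq.
rewrite (eq_count (a2 := fun q' => (q' == q) && (quartet_side l q == x))).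
  case: eqP => _; last by rewrite (eq_count (a2 := pred0)) ?count_pred0 // => ?; rewrite andbF.
  by rewrite (eq_count (a2 := pred1 q)) ?count_uniq_mem ?q_in // => ?; rewrite andbT.
by move=> q' /=; rewrite xpair_eqE; case: eqP => // ->.
Qed.

Lemma perm_restrict_quartets l :
  {in quartet_codes, forall q, restricts_to_quartet l q} ->
  perm_eq [seq restrict (tree_of_codes l) Q | Q <- quartets n]
          (map quartet_tree (quartet_sides l)).
Proof.
move=> restr_l; apply: perm_trans (perm_map _ perm_quartets) _.
suff -> : [seq restrict (tree_of_codes l) Q | Q <- map set_of_code quartet_codes] =
          map quartet_tree (quartet_sides l) by [].
rewrite -!map_comp; apply/eq_in_map => q q_in /=.
exact: restrict_tree_of_codes (restr_l q q_in).
Qed.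

Definition quartets_certified :=
  all (fun t => all (fun q => restricts_to_quartet t q && quartet_side_pair (q, quartet_side t q))
                    quartet_codes) code_trees.

Lemma matched_quartet_sides t1 t2 t3 t4 : quartets_certified ->
  all (mem code_trees) [:: t1; t2; t3; t4] ->
  quartet_matched (tree_of_codes t1) (tree_of_codes t2) (tree_of_codes t3)
                  (tree_of_codes t4) ->
  {in quartet_codes, forall q,
     ((quartet_side t3 q == quartet_side t1 q) || (quartet_side t3 q == quartet_side t2 q)) /\
     quartet_side t4 q = if quartet_side t3 q == quartet_side t1 q
                         then quartet_side t2 q else quartet_side t1 q}.
Proof.
move=> /allP certified /and5P[t1T t2T t3T t4T _] matched q q_in.
have cert t : t \in code_trees -> {in quartet_codes, forall q,
    restricts_to_quartet t q /\ quartet_side_pair (q, quartet_side t q)}.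
  by move=> tT q' q'_in; apply/andP; apply: (allP (certified t tT)).
have perm_sides t t' : t \in code_trees -> t' \in code_trees ->
    perm_eq (quartet_multiset (tree_of_codes t) (tree_of_codes t'))
            (map quartet_tree (quartet_sides t ++ quartet_sides t')).
  move=> tT t'T; rewrite map_cat; apply: perm_cat; apply: perm_restrict_quartets.
    by move=> q' /(cert t tT)[].
  by move=> q' /(cert t' t'T)[].
have side_pairs t : t \in code_trees -> all quartet_side_pair (quartet_sides t).
  by move=> tT; rewrite all_map; apply/allP=> q' /(cert t tT)[].
have perm_12_34 : perm_eq (quartet_sides t1 ++ quartet_sides t2)
                          (quartet_sides t3 ++ quartet_sides t4).
  apply: (perm_map_inj_in quartet_tree_inj); rewrite ?all_cat ?side_pairs //.
  apply: perm_trans (perm_trans _ matched) (perm_sides _ _ t3T t4T).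
  by rewrite perm_sym perm_sides.
apply: eq_pair_count => x.
by have := seq.permP perm_12_34 (pred1 (q, x)); rewrite !count_cat !count_quartet_sides.
Qed.

Definition quartet_profile t := map (quartet_side t) quartet_codes.

(* Per quartet, the sides of t1, t2 and t3 force the side of t4, so only the
   fourth trees with the forced profile are inspected. *)
Definition quartet_search (P : seq bitseq -> seq bitseq -> seq bitseq -> seq bitseq -> bool) :=
  let TP := [seq (t, quartet_profile t) | t <- code_trees] in
  all (fun x1 => all (fun x2 => all (fun x3 =>
    if all3_lazy (fun a b c => (c == a) || (c == b)) x1.2 x2.2 x3.2 then
      let v4 := map3 (fun a b c => if c == a then b else a) x1.2 x2.2 x3.2 in
      all (fun x4 => if all2_lazy eq_op x4.2 v4 then P x1.1 x2.1 x3.1 x4.1 else true) TP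
    else true) TP) TP) TP.

Lemma quartet_search_sound P : quartets_certified -> quartet_search P ->
  forall T1 T2 T3 T4 : tree_t n,
  is_binary_tree T1 -> is_binary_tree T2 -> is_binary_tree T3 -> is_binary_tree T4 ->
  quartet_matched T1 T2 T3 T4 ->
  exists t1 t2 t3 t4, [/\ T1 = tree_of_codes t1, T2 = tree_of_codes t2,
    T3 = tree_of_codes t3, T4 = tree_of_codes t4 & P t1 t2 t3 t4].
Proof.
move=> certified search T1 T2 T3 T4.
move=> /binary_tree_in_code_trees[t1 t1T ->] /binary_tree_in_code_trees[t2 t2T ->].
move=> /binary_tree_in_code_trees[t3 t3T ->] /binary_tree_in_code_trees[t4 t4T ->].
move=> /(matched_quartet_sides certified); rewrite /= t1T t2T t3T t4T => /(_ isT) sides.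
exists t1, t2, t3, t4; split=> //.
have TP t : t \in code_trees -> (t, quartet_profile t) \in
    [seq (t, quartet_profile t) | t <- code_trees] by move=> tT; rewrite map_f.
move/allP/(_ _ (TP _ t1T))/allP/(_ _ (TP _ t2T))/allP/(_ _ (TP _ t3T)): search.
rewrite /= /quartet_profile all3_lazy_map map3_map.
rewrite (_ : all _ _ = true); last first.
  by apply/allP=> q /sides[].
move/allP/(_ _ (TP _ t4T)); rewrite /= all2_lazy_eq.
case: eqP => [//|profile4 _]; case: profile4.
by apply/eq_in_map=> q /sides[].
Qed.

End Quartets.

Definition upair_eqb (T : eqType) (a b c d : T) :=
  if a == c then b == d else (a == d) && (b == c).

Lemma upair_eqb_map (T : eqType) (U : Type) (F : T -> U) (a b c d : T) :
  upair_eqb a b c d -> upair_eq (F a) (F b) (F c) (F d).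
Proof.
by rewrite /upair_eqb; case: eqP => [-> /eqP->|_ /andP[/eqP-> /eqP->]]; [left|right].
Qed.

Lemma relabelK n (s : {perm 'I_n}) : cancel (relabel s) (relabel s^-1%g).
Proof.
have imset_permK (A : {set 'I_n}) : s^-1%g @: (s @: A) = A.
  by rewrite -imset_comp (eq_imset _ (g := id)) ?imset_id // => x /=; rewrite permK.
move=> T; rewrite /relabel -imset_comp (eq_imset _ (g := id)) ?imset_id // => sp /=.
by rewrite -imset_comp (eq_imset _ (g := id)) ?imset_id // => A /=; rewrite imset_permK.
Qed.

(* Leaf i is sent to leaf f_i. *)
Definition relabel_code (f : seq nat) (c : bitseq) :=
  mkseq (fun j => nth false c (index j f)) (size f).

Section Relabeling.
Variables (m : nat) (f : seq nat).
Hypothesis perm_f : perm_eq f (iota 0 m.+1).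

Let size_f : size f = m.+1.
Proof. by rewrite (perm_size perm_f) size_iota. Qed.

Let mem_f x : (x \in f) = (x < m.+1).
Proof. by rewrite (perm_mem perm_f) mem_iota. Qed.

Let nth_f_lt i : i < m.+1 -> nth 0 f i < m.+1.
Proof. by move=> lt_i; rewrite -mem_f mem_nth ?size_f. Qed.

Let index_f_lt (j : 'I_m.+1) : index (j : nat) f < m.+1.
Proof. by rewrite -[X in _ < X]size_f index_mem mem_f. Qed.

Definition relabeling_fun (i : 'I_m.+1) : 'I_m.+1 := inord (nth 0 f i).

Lemma relabeling_fun_inj : injective relabeling_fun.
Proof.
move=> i j /(congr1 val); rewrite /relabeling_fun /= !inordK ?nth_f_lt // => /eqP.
by rewrite nth_uniq ?size_f ?(perm_uniq perm_f) ?iota_uniq // => /eqP /val_inj.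
Qed.

Definition relabeling : {perm 'I_m.+1} := perm relabeling_fun_inj.

Lemma relabeling_set_of_code c :
  relabeling @: set_of_code m.+1 c = set_of_code m.+1 (relabel_code f c).
Proof.
apply/setP=> j; rewrite inE /relabel_code nth_mkseq ?size_f //.
apply/imsetP/idP=> [[i]|f_j].
  rewrite inE permE /relabeling_fun => c_i ->.
  by rewrite inordK ?nth_f_lt // index_uniq ?size_f ?(perm_uniq perm_f) ?iota_uniq.
exists (Ordinal (index_f_lt j)); first by rewrite inE.
by apply: val_inj; rewrite permE /relabeling_fun /= nth_index ?inordK ?mem_f.
Qed.

Lemma relabel_code_compl c :
  set_of_code m.+1 (relabel_code f (code_compl m.+1 c)) =
  ~: set_of_code m.+1 (relabel_code f c).
Proof. by apply/setP=> j; rewrite !inE /relabel_code !nth_mkseq ?size_f. Qed.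

Lemma relabel_tree_of_codes t :
  relabel relabeling (tree_of_codes m.+1 t) = tree_of_codes m.+1 (map (relabel_code f) t).
Proof.
have relabel_split (c : bitseq) :
    [set relabeling @: A | A : {set 'I_m.+1} in split_of_code m.+1 c] =
    split_of_code m.+1 (relabel_code f c).
  rewrite /split_of_code /mk_split imsetU1 imset_set1 -set_of_code_compl.
  by rewrite !relabeling_set_of_code relabel_code_compl.
apply/setP=> y; rewrite inE; apply/imsetP/mapP=> [[s]|[d /mapP[c ct ->] ->]].
  rewrite inE => /mapP[c ct ->] ->.
  by exists (relabel_code f c); rewrite ?map_f ?relabel_split.
by exists (split_of_code m.+1 c); rewrite ?relabel_split // inE map_f.
Qed.

End Relabeling.

Definition norm_code n (c : bitseq) := if nth false c 0 then code_compl n c else c.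

Definition code_rank (c : bitseq) := foldl (fun k (b : bool) => k.*2 + b) 0 c.

(* Normalised and ordered as the elements of [code_trees], so that [==] decides
   the equality of the trees. *)
Definition canonical_codes n (l : seq bitseq) :=
  sort (fun c d => code_rank c <= code_rank d) (map (norm_code n) l).

Lemma tree_of_canonical_codes n l : tree_of_codes n (canonical_codes n l) = tree_of_codes n l.
Proof.
apply/setP=> s; rewrite !inE (perm_mem (perm_map _ (permEl (perm_sort _ _)))) -map_comp.
rewrite (eq_map (g := split_of_code n)) // => c /=.
by rewrite /norm_code; case: ifP; rewrite ?split_of_code_compl.
Qed.

(* Leaves are given with the labels 1..6 of the paper. *)
Definition code_of_leaves (ks : seq nat) := mkseq (fun i => i.+1 \in ks) 6.

Definition ref_codes1 := map code_of_leaves [:: [:: 1; 2]; [:: 1; 2; 3]; [:: 1; 2; 3; 4]].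
Definition ref_codes2 := map code_of_leaves [:: [:: 1; 3]; [:: 1; 2; 3]; [:: 1; 2; 3; 5]].
Definition ref_codes3 := map code_of_leaves [:: [:: 1; 3]; [:: 1; 2; 3]; [:: 1; 2; 3; 4]].
Definition ref_codes4 := map code_of_leaves [:: [:: 1; 2]; [:: 1; 2; 3]; [:: 1; 2; 3; 5]].

Lemma reference_trees :
  [/\ T1_6 = tree_of_codes 6 ref_codes1, T2_6 = tree_of_codes 6 ref_codes2,
      T3_6 = tree_of_codes 6 ref_codes3 & T4_6 = tree_of_codes 6 ref_codes4].
Proof.
have tree3 a b c : tree_of_codes 6 [:: a; b; c] =
    [set split_of_code 6 a; split_of_code 6 b; split_of_code 6 c].
  by apply/setP=> s; rewrite !inE ?orbF orbA.
rewrite !tree3 /split_of_code.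
split; congr [set mk_split _; mk_split _; mk_split _]; apply/setP=> i;
  rewrite !inE /L6 -!val_eqE /= !inordK //;
  by case: i => [[|[|[|[|[|[|k]]]]]] lt_i].
Qed.

Definition relabeled_reference (f : seq nat) :=
  let r := fun l => canonical_codes 6 (map (relabel_code f) l) in
  (r ref_codes1, r ref_codes2, r ref_codes3, r ref_codes4).

Definition reference_orbit := map relabeled_reference (permutations (iota 0 6)).

Definition six_leaf_config (t1 t2 t3 t4 : seq bitseq) :=
  if upair_eqb t1 t2 t3 t4 then true
  else has_lazy (fun u => let: (u1, u2, u3, u4) := u in
                 if upair_eqb t1 t2 u1 u2 then upair_eqb t3 t4 u3 u4
                 else upair_eqb t1 t2 u3 u4 && upair_eqb t3 t4 u1 u2) reference_orbit.

Lemma quartets_certified5 : quartets_certified 5.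
Proof. vm_cast_no_check (erefl true). Qed.

Lemma quartet_search5 : quartet_search 5 (@upair_eqb _).
Proof. vm_cast_no_check (erefl true). Qed.

Lemma quartets_certified6 : quartets_certified 6.
Proof. vm_cast_no_check (erefl true). Qed.

Lemma quartet_search6 : quartet_search 6 six_leaf_config.
Proof. vm_cast_no_check (erefl true). Qed.

Lemma quartet_matched_five_leaves (T1 T2 T3 T4 : tree_t 5) :
  is_binary_tree T1 -> is_binary_tree T2 -> is_binary_tree T3 -> is_binary_tree T4 ->
  quartet_matched T1 T2 T3 T4 -> upair_eq T1 T2 T3 T4.
Proof.
move=> b1 b2 b3 b4 /(quartet_search_sound quartets_certified5 quartet_search5 b1 b2 b3 b4).
by case=> [t1 [t2 [t3 [t4 [-> -> -> -> /(upair_eqb_map (tree_of_codes 5))]]]]].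
Qed.

Lemma quartet_matched_six_leaves (T1 T2 T3 T4 : tree_t 6) :
  is_binary_tree T1 -> is_binary_tree T2 -> is_binary_tree T3 -> is_binary_tree T4 ->
  quartet_matched T1 T2 T3 T4 -> ~ upair_eq T1 T2 T3 T4 ->
  exists s : {perm 'I_6},
    same_config (relabel s T1) (relabel s T2) (relabel s T3) (relabel s T4)
                T1_6 T2_6 T3_6 T4_6.
Proof.
move=> b1 b2 b3 b4 /(quartet_search_sound quartets_certified6 quartet_search6 b1 b2 b3 b4).
case=> [t1 [t2 [t3 [t4 [-> -> -> ->]]]]] config not_eq.
move: config; rewrite /six_leaf_config.
case: ifP => [/(upair_eqb_map (tree_of_codes 6))/not_eq//|_].
rewrite has_lazyE => /hasP[u /mapP[f perm_f ->] ref_match].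
rewrite mem_permutations in perm_f.
set s := ((relabeling perm_f)^-1)%g.
have relabel_ref R : tree_of_codes 6 R =
    relabel s (tree_of_codes 6 (canonical_codes 6 (map (relabel_code f) R))).
  by rewrite tree_of_canonical_codes -relabel_tree_of_codes relabelK.
have [-> -> -> ->] := reference_trees.
rewrite (relabel_ref ref_codes1) (relabel_ref ref_codes2) (relabel_ref ref_codes3).
rewrite (relabel_ref ref_codes4).
exists s; have F := upair_eqb_map (fun t => relabel s (tree_of_codes 6 t)).
by move: ref_match => /=; case: ifP => [/F ? /F ?|_ /andP[/F ? /F ?]]; [left|right].
Qed.

Theorem proposition4 :
  (forall T1 T2 T3 T4 : tree_t 5,
     is_binary_tree T1 -> is_binary_tree T2 ->
     is_binary_tree T3 -> is_binary_tree T4 ->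
     quartet_matched T1 T2 T3 T4 -> upair_eq T1 T2 T3 T4)
  /\
  (forall T1 T2 T3 T4 : tree_t 6,
     is_binary_tree T1 -> is_binary_tree T2 ->
     is_binary_tree T3 -> is_binary_tree T4 ->
     quartet_matched T1 T2 T3 T4 -> ~ upair_eq T1 T2 T3 T4 ->
     exists s : {perm 'I_6},
       same_config (relabel s T1) (relabel s T2) (relabel s T3) (relabel s T4)
                   T1_6 T2_6 T3_6 T4_6).
Proof.
split; [exact: quartet_matched_five_leaves | exact: quartet_matched_six_leaves].
Qed.
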